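(* Identify $\mathbb{Z}^4$ with $\mathbb{H}(\mathbb{Z})$ via $(x,y,z,t)\mapsto x+yi+zj+tk$. Let $q_1,q_2\in\mathbb{H}(\mathbb{Z})$ be odd integer quaternions, neither of which is right-divisible in $\mathbb{H}(\mathbb{Z})$ by any quaternion $\alpha+\beta i$ with $\alpha,\beta\in\mathbb{Z}$ and $\alpha^2+\beta^2>1$. Let $u=q_1 j\overline{q_2}=(u_1,u_2,u_3,u_4)$ and $v=q_1 k\overline{q_2}=(v_1,v_2,v_3,v_4)$, and let $\square=\mathrm{conv}\{0,u,v,u+v\}$. Then the area of a fundamental domain of the lattice $\mathbb{Z}^4\cap\operatorname{span}_{\mathbb{R}}\{u,v\}$ equals $\operatorname{lcm}(N(q_1),N(q_2))$, and the Ehrhart polynomial of $\square$ is $$E_\square(t)=\gcd(N(q_1),N(q_2))\,t^2+(D_1+D_2)\,t+1,$$ where $D_1=\gcd(u_1,u_2,u_3,u_4)$ and $D_2=\gcd(v_1,v_2,v_3,v_4)$.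
   Context: $\mathbb{H}(\mathbb{Z})$ denotes quaternions $x+yi+zj+tk$ with $x,y,z,t\in\mathbb{Z}$, with $i^2=j^2=k^2=-1$, $ij=-ji=k$, $jk=-kj=i$, $ki=-ik=j$; $\overline{q}=x-yi-zj-tk$ and $N(q)=x^2+y^2+z^2+t^2$. A quaternion $q$ is odd if $N(q)$ is odd. Right-divisible by $\pi$ means $q=q'\pi$ with $q'\in\mathbb{H}(\mathbb{Z})$. The Ehrhart polynomial of a lattice polytope $P\subset\mathbb{R}^4$ is the polynomial $E_P$ with $E_P(t)=\#(tP\cap\mathbb{Z}^4)$ for all positive integers $t$. *)

From HB Require Import structures.
From mathcomp Require Import all_boot all_order all_algebra.
Set Implicit Arguments. Unset Strict Implicit. Unset Printing Implicit Defensive.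
Import Order.TTheory GRing.Theory Num.Theory.
Local Open Scope ring_scope.

(* Integer quaternions x + y i + z j + t k, identified with Z^4 = (x,y,z,t). *)
Definition quat := (int * int * int * int)%type.
Definition Quat (x y z t : int) : quat := (x, y, z, t).
Definition qx (q : quat) : int := q.1.1.1.
Definition qy (q : quat) : int := q.1.1.2.
Definition qz (q : quat) : int := q.1.2.
Definition qt (q : quat) : int := q.2.

Definition qcoord (q : quat) (k : nat) : int := nth 0 [:: qx q; qy q; qz q; qt q] k.

Definition qadd (p q : quat) : quat :=
  Quat (qx p + qx q) (qy p + qy q) (qz p + qz q) (qt p + qt q).

(* Hamilton product: i^2=j^2=k^2=-1, ij=k, jk=i, ki=j *)
Definition qmul (p q : quat) : quat :=
  let: (a1, b1, c1, d1) := (qx p, qy p, qz p, qt p) in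
  let: (a2, b2, c2, d2) := (qx q, qy q, qz q, qt q) in
  Quat (a1*a2 - b1*b2 - c1*c2 - d1*d2)
       (a1*b2 + b1*a2 + c1*d2 - d1*c2)
       (a1*c2 - b1*d2 + c1*a2 + d1*b2)
       (a1*d2 + b1*c2 - c1*b2 + d1*a2).

Definition qconj (q : quat) : quat := Quat (qx q) (- qy q) (- qz q) (- qt q).

Definition qnorm (q : quat) : int := qx q ^+ 2 + qy q ^+ 2 + qz q ^+ 2 + qt q ^+ 2.

Definition qj : quat := Quat 0 0 1 0.
Definition qk : quat := Quat 0 0 0 1.

Definition qodd (q : quat) : bool := odd `|qnorm q|%N.

Definition right_divisible (q pi : quat) : Prop := exists q' : quat, q = qmul q' pi.

Definition no_gauss_right_divisor (q : quat) : Prop :=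
  forall alpha beta : int, 1 < alpha ^+ 2 + beta ^+ 2 ->
    ~ right_divisible q (Quat alpha beta 0 0).

Definition qdot (p q : quat) : int :=
  qx p * qx q + qy p * qy q + qz p * qz q + qt p * qt q.

Definition in_rspan (R : rcfType) (u v w : quat) : Prop :=
  exists c d : R, forall k : nat, (k < 4)%N ->
    (qcoord w k)%:~R = c * (qcoord u k)%:~R + d * (qcoord v k)%:~R.

Definition is_lattice_basis (R : rcfType) (u v a b : quat) : Prop :=
  in_rspan R u v a /\ in_rspan R u v b /\
  forall w : quat, in_rspan R u v w <->
    exists m n : int, forall k : nat, (k < 4)%N ->
      qcoord w k = m * qcoord a k + n * qcoord b k.

(* area of the fundamental parallelogram spanned by a, b in R^4:
   sqrt of the Gram determinant *)
Definition par_area (R : rcfType) (a b : quat) : R :=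
  Num.sqrt ((qdot a a * qdot b b - qdot a b ^+ 2)%:~R).

Definition in_dil_conv (R : rcfType) (t : nat) (ps : seq quat) (w : quat) : Prop :=
  exists l : seq R, size l = size ps /\ (forall i, (i < size l)%N -> 0 <= l`_i) /\
    \sum_(i < size ps) l`_i = 1 /\
    forall k : nat, (k < 4)%N ->
      (qcoord w k)%:~R = t%:R * \sum_(i < size ps) l`_i * (qcoord (nth 0 ps i) k)%:~R.

Definition lattice_count (R : rcfType) (t : nat) (ps : seq quat) (n : nat) : Prop :=
  exists s : seq quat, uniq s /\ (forall w, w \in s <-> in_dil_conv R t ps w) /\
    size s = n.

Definition gcd4 (q : quat) : int := gcdz (gcdz (gcdz (qx q) (qy q)) (qz q)) (qt q).

From HB Require Import structures.
From mathcomp Require Import all_boot all_order all_algebra.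
From mathcomp Require Import zify ring lra.
Set Implicit Arguments.
Unset Strict Implicit.
Unset Printing Implicit Defensive.
Import Order.TTheory GRing.Theory Num.Theory.
Local Open Scope ring_scope.

(* Write N1, N2 for the norms of q1, q2, P = N1 N2 and g = gcd(N1, N2).  The vectors
   u = q1 j q2^* and v = q1 k q2^* are orthogonal of squared length P, so w in Z^4 lies in
   their plane iff P w = (w.u) u + (w.v) v.  The heart of the matter is that g is the gcd of
   the 2x2 minors of (u, v): the self-dual and anti-self-dual parts of u /\ v are N2 q1 i q1^*
   and N1 q2 i q2^*, and the absence of Gaussian right divisors makes the coordinates of
   q i q^* coprime (a Euclid argument in Z[i]).  Hence, with D1 = gcd(u) = y.u and Y = y.v for
   a Bezout vector y, the plane lattice has the basis a = u / D1, b = (D1 v - Y u) / g, whose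
   Gram determinant is (P / g)^2 = lcm(N1, N2)^2.  Writing g = h D1, the point m a + n b lies
   in t conv(0, u, v, u + v) iff 0 <= n <= t h and 0 <= m h - n Y <= t D1 h; summing over n
   gives g t^2 + (D1 + gcd(h, Y)) t + 1 points, and gcd(h, Y) = gcd(v) since v = Y a + h b. *)

Lemma qcoord_out (q : quat) (k : nat) : (4 <= k)%N -> qcoord q k = 0.
Proof. by move=> k_ge4; rewrite /qcoord nth_default. Qed.

Lemma quatP (p q : quat) :
  (forall k, (k < 4)%N -> qcoord p k = qcoord q k) -> p = q.
Proof.
case: p q => [[[x y] z] t] [[[x' y'] z'] t'] eq_pq.
by rewrite [x](eq_pq 0%N) // [y](eq_pq 1%N) // [z](eq_pq 2%N) // [t](eq_pq 3%N).
Qed.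

Definition qscale (c : int) (a : quat) : quat :=
  Quat (c * qx a) (c * qy a) (c * qz a) (c * qt a).

Definition qlin (m : int) (a : quat) (n : int) (b : quat) : quat :=
  Quat (m * qx a + n * qx b) (m * qy a + n * qy b) (m * qz a + n * qz b)
       (m * qt a + n * qt b).

Definition qdivz (a : quat) (d : int) : quat :=
  Quat (qx a %/ d)%Z (qy a %/ d)%Z (qz a %/ d)%Z (qt a %/ d)%Z.

Lemma qcoord_scale c a k : qcoord (qscale c a) k = c * qcoord a k.
Proof.
by case: k => [|[|[|[|k]]]] //; rewrite !qcoord_out // mulr0.
Qed.

Lemma qcoord_lin m a n b k :
  qcoord (qlin m a n b) k = m * qcoord a k + n * qcoord b k.
Proof.
by case: k => [|[|[|[|k]]]] //; rewrite !qcoord_out // !mulr0 addr0.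
Qed.

Lemma qcoord_add p q k : qcoord (qadd p q) k = qcoord p k + qcoord q k.
Proof. by case: k => [|[|[|[|k]]]] //; rewrite !qcoord_out // addr0. Qed.

Lemma qdivzK a d : (forall k, (d %| qcoord a k)%Z) -> qscale d (qdivz a d) = a.
Proof.
move=> d_dvd; apply: quatP => k k_lt4; rewrite qcoord_scale mulrC.
by case: k k_lt4 (d_dvd k) => [|[|[|[|k]]]] // _ /divzK.
Qed.

Lemma qdotC p q : qdot p q = qdot q p.
Proof. by rewrite /qdot; ring. Qed.

Lemma qdot_scalel c a w : qdot (qscale c a) w = c * qdot a w.
Proof. by rewrite /qdot /qx /qy /qz /qt /=; ring. Qed.

Lemma qdot_linl m a n b w : qdot (qlin m a n b) w = m * qdot a w + n * qdot b w.
Proof. by rewrite /qdot /qx /qy /qz /qt /=; ring. Qed.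

Lemma qdot_linr m a n b w : qdot w (qlin m a n b) = m * qdot w a + n * qdot w b.
Proof. by rewrite qdotC qdot_linl !(qdotC w). Qed.

Lemma qdot_scaler c a w : qdot w (qscale c a) = c * qdot w a.
Proof. by rewrite qdotC qdot_scalel qdotC. Qed.

Lemma qscale_lin c m a n b : qscale c (qlin m a n b) = qlin (c * m) a (c * n) b.
Proof. by apply: quatP => k _; rewrite qcoord_scale !qcoord_lin; ring. Qed.

Lemma dvdz_anti (m n : int) : 0 <= m -> 0 <= n -> (m %| n)%Z -> (n %| m)%Z -> m = n.
Proof.
move=> m_ge0 n_ge0 mn nm; rewrite -(gez0_abs m_ge0) -(gez0_abs n_ge0); congr Posz.
by apply/eqP; rewrite eqn_dvd -!dvdzE mn nm.
Qed.

(** * The gcd of the coordinates *)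

Definition gcd4_coef (q : quat) : quat :=
  let: (e1, f1) := egcdz (qx q) (qy q) in
  let: (e2, f2) := egcdz (gcdz (qx q) (qy q)) (qz q) in
  let: (e3, f3) := egcdz (gcdz (gcdz (qx q) (qy q)) (qz q)) (qt q) in
  Quat (e3 * e2 * e1) (e3 * e2 * f1) (e3 * f2) f3.

Lemma gcd4_coefP q : qdot (gcd4_coef q) q = gcd4 q.
Proof.
rewrite /gcd4_coef /gcd4.
case: egcdzP => e1 f1 E1 _; case: egcdzP => e2 f2 E2 _; case: egcdzP => e3 f3 E3 _.
by rewrite -E3 -E2 -E1 /qdot /qx /qy /qz /qt /=; ring.
Qed.

Lemma gcd4_ge0 q : 0 <= gcd4 q.
Proof. by []. Qed.

Lemma gcd4_dvd q k : (gcd4 q %| qcoord q k)%Z.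
Proof.
have d3 := dvdz_gcdl (gcdz (gcdz (qx q) (qy q)) (qz q)) (qt q).
have d2 := dvdz_trans d3 (dvdz_gcdl (gcdz (qx q) (qy q)) (qz q)).
case: k => [|[|[|[|k]]]]; last by rewrite qcoord_out ?dvdz0.
- exact: dvdz_trans d2 (dvdz_gcdl _ _).
- exact: dvdz_trans d2 (dvdz_gcdr _ _).
- exact: dvdz_trans d3 (dvdz_gcdr _ _).
- exact: dvdz_gcdr.
Qed.

Lemma dvdz_gcd4 d q : (forall k, (k < 4)%N -> (d %| qcoord q k)%Z) -> (d %| gcd4 q)%Z.
Proof. by move=> dvd_q; rewrite !dvdz_gcd (dvd_q 0%N) ?(dvd_q 1%N) ?(dvd_q 2%N) ?(dvd_q 3%N). Qed.

Lemma gcd4_gt0 q : 0 < qdot q q -> 0 < gcd4 q.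
Proof.
move=> /gt_eqF/negbT qq_neq0; rewrite lt0r gcd4_ge0 andbT.
apply: contraNneq qq_neq0 => gcd0.
have q0 k : qcoord q k = 0.
  by have /dvdzP[c ->] := gcd4_dvd q k; rewrite gcd0 mulr0.
move: (q0 0%N) (q0 1%N) (q0 2%N) (q0 3%N); rewrite /qcoord /qdot /= => -> -> -> ->.
by rewrite !mulr0 !addr0.
Qed.

Lemma gcd4K q : qscale (gcd4 q) (qdivz q (gcd4 q)) = q.
Proof. exact/qdivzK/gcd4_dvd. Qed.

(** * The plane spanned by an orthogonal pair *)

Definition in_plane (u v w : quat) : Prop :=
  qscale (qdot u u) w = qlin (qdot w u) u (qdot w v) v.

Lemma unit_square_convex (R : realFieldType) (x y : R) :
  0 <= x <= 1 -> 0 <= y <= 1 ->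
  exists l1 l2 l3 : R, [/\ 0 <= l1, 0 <= l2, 0 <= l3, l1 + l2 + l3 <= 1 &
    l1 + l3 = x /\ l2 + l3 = y].
Proof.
move=> /andP[x_ge0 x_le1] /andP[y_ge0 y_le1].
have [x_le_y | y_lt_x] := leP x y.
- by exists 0, (y - x), x; split; lra.
- by exists (x - y), 0, y; split; lra.
Qed.

Section Plane.

Variables (R : rcfType) (u v : quat) (P : int).
Hypotheses (uv0 : qdot u v = 0) (uuP : qdot u u = P) (vvP : qdot v v = P) (P_gt0 : 0 < P).

Lemma rspan_dot (w : quat) (c d : R) :
  (forall k, (k < 4)%N -> (qcoord w k)%:~R = c * (qcoord u k)%:~R + d * (qcoord v k)%:~R) ->
  (qdot w u)%:~R = c * P%:~R /\ (qdot w v)%:~R = d * P%:~R.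
Proof.
move=> w_coord; move: (w_coord 0%N) (w_coord 1%N) (w_coord 2%N) (w_coord 3%N).
rewrite /qcoord /= => /(_ isT) w0 /(_ isT) w1 /(_ isT) w2 /(_ isT) w3.
have uvR : (qdot u v)%:~R = 0 :> R by rewrite uv0.
split.
- rewrite -uuP -[LHS]subr0 -(mulr0 d) -uvR /qdot !rmorphD !rmorphM /= w0 w1 w2 w3; ring.
- rewrite -vvP -[LHS]subr0 -(mulr0 c) -uvR /qdot !rmorphD !rmorphM /= w0 w1 w2 w3; ring.
Qed.

Lemma in_rspanP w : in_rspan R u v w <-> in_plane u v w.
Proof.
have PR_neq0 : P%:~R != 0 :> R by rewrite intr_eq0 gt_eqF.
split=> [[c [d w_coord]] | w_plane].
- have [wu wv] := rspan_dot w_coord.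
  apply: quatP => k k_lt4; apply: (intr_inj (R := R)).
  rewrite qcoord_scale qcoord_lin uuP !rmorphD !rmorphM /= wu wv w_coord //; ring.
- exists ((qdot w u)%:~R / P%:~R), ((qdot w v)%:~R / P%:~R) => k _.
  have w_k := congr1 (fun q => (qcoord q k)%:~R : R) w_plane.
  rewrite /= qcoord_scale qcoord_lin uuP !rmorphD !rmorphM /= in w_k.
  by apply: (mulfI PR_neq0); rewrite w_k; field.
Qed.

Lemma in_dil_conv_parallelogram t w :
  in_dil_conv R t [:: Quat 0 0 0 0; u; v; qadd u v] w <->
  exists x y : R, [/\ 0 <= x <= 1, 0 <= y <= 1 &
    forall k, (k < 4)%N ->
      (qcoord w k)%:~R = t%:R * (x * (qcoord u k)%:~R + y * (qcoord v k)%:~R)].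
Proof.
have qcoord0 k : qcoord (Quat 0 0 0 0) k = 0.
  by case: k => [|[|[|[|k]]]] //; rewrite qcoord_out.
split=> [[l [size_l [l_ge0 [sum_l w_coord]]]] | [x [y [x01 y01 w_coord]]]].
- case: l size_l l_ge0 sum_l w_coord => [|l0 [|l1 [|l2 [|l3 []]]]] //= _ l_ge0.
  rewrite !big_ord_recl big_ord0 /= => sum_l w_coord.
  have := l_ge0 0%N; have := l_ge0 1%N; have := l_ge0 2%N; have := l_ge0 3%N.
  move=> /(_ isT) /= l3_ge0 /(_ isT) /= l2_ge0 /(_ isT) /= l1_ge0 /(_ isT) /= l0_ge0.
  exists (l1 + l3), (l2 + l3); split; rewrite ?lerDl; try lra.
  move=> k k_lt4; rewrite w_coord // !big_ord_recl big_ord0 /bump /=.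
  by rewrite qcoord0 qcoord_add rmorphD /=; ring.
- have [l1 [l2 [l3 [l1_ge0 l2_ge0 l3_ge0 sum_le1 [x_def y_def]]]]] := unit_square_convex x01 y01.
  exists [:: 1 - (l1 + l2 + l3); l1; l2; l3]; split=> //; split.
    by case=> [|[|[|[|i]]]] //= _; lra.
  split=> [|k k_lt4]; rewrite !big_ord_recl big_ord0 /bump /=; first by ring.
  by rewrite w_coord // qcoord0 qcoord_add rmorphD /= -x_def -y_def; ring.
Qed.

Lemma in_dil_conv_square t w : (0 < t)%N ->
  in_dil_conv R t [:: Quat 0 0 0 0; u; v; qadd u v] w <->
  [/\ in_plane u v w, 0 <= qdot w u <= t%:Z * P & 0 <= qdot w v <= t%:Z * P].
Proof.
move=> t_gt0; have tR_gt0 : 0 < t%:R :> R by rewrite ltr0n.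
have PR_gt0 : 0 < P%:~R :> R by rewrite ltr0z.
have scaled_bound (s : int) (x : R) : s%:~R = t%:R * x * P%:~R ->
    (0 <= s <= t%:Z * P) = (0 <= x <= 1).
  have tP_gt0 : 0 < t%:R * P%:~R :> R by rewrite mulr_gt0.
  move=> s_def; rewrite -!(ler_int R) rmorphM /= s_def mulr0z.
  change (t%:Z%:~R) with (t%:R : R).
  by rewrite mulrAC (pmulr_rge0 _ tP_gt0) (ger_pMr _ tP_gt0).
split=> [/in_dil_conv_parallelogram [x [y [x01 y01 w_coord]]] |
         [/in_rspanP [c [d w_coord]] wu_bound wv_bound]].
- have w_coord' k : (k < 4)%N -> (qcoord w k)%:~R =
      t%:R * x * (qcoord u k)%:~R + t%:R * y * (qcoord v k)%:~R :> R.
    by move=> k_lt4; rewrite w_coord // mulrDr !mulrA.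
  have [wu wv] := rspan_dot w_coord'.
  split.
  + by apply/in_rspanP; exists (t%:R * x), (t%:R * y).
  + by rewrite (scaled_bound _ x).
  + by rewrite (scaled_bound _ y).
- have [wu wv] := rspan_dot w_coord.
  have tK (z : R) : z = t%:R * (z / t%:R) by rewrite mulrC divfK // gt_eqF.
  rewrite (scaled_bound _ (c / t%:R)) in wu_bound; last by rewrite wu -tK.
  rewrite (scaled_bound _ (d / t%:R)) in wv_bound; last by rewrite wv -tK.
  apply/in_dil_conv_parallelogram; exists (c / t%:R), (d / t%:R); split=> // k k_lt4.
  by rewrite w_coord //; field; rewrite gt_eqF.
Qed.

End Plane.

(** * Counting integers in intervals *)

Definition zrange (lo : int) (len : nat) : seq int := [seq lo + j%:Z | j <- iota 0 len].

Lemma mem_zrange lo len m : (m \in zrange lo len) = (lo <= m < lo + len%:Z).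
Proof.
apply/mapP/idP=> [[j] | /andP[lo_le_m m_lt]].
  by rewrite mem_iota add0n => /andP[_ j_lt] ->; apply/andP; split; lia.
by exists `|m - lo|%N; [rewrite mem_iota; apply/andP; split | ]; lia.
Qed.

Lemma zrange_uniq lo len : uniq (zrange lo len).
Proof. by rewrite map_inj_uniq ?iota_uniq // => i j /addrI[]. Qed.

Lemma size_zrange lo len : size (zrange lo len) = len.
Proof. by rewrite size_map size_iota. Qed.

Definition mul_range (h c : int) (L : nat) : seq int :=
  zrange ((c %/ h)%Z + (~~ (h %| c)%Z : nat)%:Z) (L + (h %| c)%Z).

Lemma mem_mul_range h c L m : 0 < h ->
  (m \in mul_range h c L) = (0 <= m * h - c <= L%:Z * h).
Proof.
move=> h_gt0; rewrite mem_zrange.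
have rho_ge0 : 0 <= (c %% h)%Z by rewrite modz_ge0 // gt_eqF.
have rho_lt : (c %% h)%Z < h by rewrite ltz_pmod.
rewrite [in RHS](divz_eq c h); move: rho_ge0 rho_lt.
have [/dvdz_mod0P -> | h_ndvd] := boolP (h %| c)%Z => /= rho_ge0 rho_lt.
  by apply/idP/idP => /andP[? ?]; apply/andP; split; nia.
have rho_gt0 : 0 < (c %% h)%Z.
  by rewrite lt0r rho_ge0 andbT; apply: contraNneq h_ndvd => /dvdz_mod0P.
by apply/idP/idP => /andP[? ?]; apply/andP; split; nia.
Qed.

Lemma mul_range_uniq h c L : uniq (mul_range h c L).
Proof. exact: zrange_uniq. Qed.

Lemma size_mul_range h c L : size (mul_range h c L) = (L + (h %| c)%Z)%N.
Proof. exact: size_zrange. Qed.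

Lemma sumn_map_add_count (s : seq nat) (L : nat) (p : pred nat) :
  sumn [seq (L + p n)%N | n <- s] = (size s * L + count p s)%N.
Proof. by elim: s => //= n s ->; rewrite mulSn; lia. Qed.

Lemma count_dvdn_iota q k : (0 < q)%N -> count (dvdn q) (iota 0 (k * q).+1) = k.+1.
Proof.
case: q => // q _; elim: k => [|k IHk]; first by rewrite mul0n.
rewrite (_ : (k.+1 * q.+1).+1 = (k * q.+1).+1 + q + 1)%N; last by rewrite mulSn; lia.
rewrite !iotaD !count_cat IHk add0n /=.
have -> : count (dvdn q.+1) (iota (k * q.+1).+1 q) = 0%N.
  apply/eqP; rewrite -leqn0 leqNgt -has_count; apply/hasPn => i.
  rewrite mem_iota => /andP[i_gt i_lt]; apply/negP => /dvdnP[z i_def].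
  rewrite i_def in i_gt i_lt.
  have : (k < z)%N by rewrite -(@ltn_pmul2r q.+1) //; lia.
  have : (z < k.+1)%N by rewrite -(@ltn_pmul2r q.+1) //; lia.
  lia.
rewrite (_ : (k * q.+1).+1 + q = k.+1 * q.+1)%N; last by rewrite mulSn; lia.
by rewrite dvdn_mull // !addn0 addn1.
Qed.

Lemma count_dvdz_mul (h Y : int) (t : nat) : 0 < h ->
  count (fun n : nat => (h %| n%:Z * Y)%Z) (iota 0 (t * `|h|).+1) = (t * `|gcdz h Y|).+1.
Proof.
move=> h_gt0; have hn_gt0 : (0 < `|h|)%N by rewrite absz_gt0 gt_eqF.
set e := gcdn `|h| `|Y|; have e_gt0 : (0 < e)%N by rewrite gcdn_gt0 hn_gt0.
have h_def : `|h|%N = (`|h| %/ e * e)%N by rewrite divnK // dvdn_gcdl.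
have Y_def : `|Y|%N = (`|Y| %/ e * e)%N by rewrite divnK // dvdn_gcdr.
have coprime_q : coprime (`|h| %/ e) (`|Y| %/ e).
  by rewrite /coprime -(eqn_pmul2r e_gt0) mul1n muln_gcdl -h_def -Y_def.
rewrite (eq_count (a2 := dvdn (`|h| %/ e))).
  have -> : (t * `|h|)%N = (t * e * (`|h| %/ e))%N by rewrite {1}h_def mulnCA mulnC.
  by apply: count_dvdn_iota; rewrite divn_gt0 // dvdn_leq // dvdn_gcdl.
move=> n /=; rewrite dvdzE abszM /= {1}Y_def {1}h_def mulnA dvdn_pmul2r //.
exact: Gauss_dvdl.
Qed.

(** * The lattice of integer points of the plane *)

Definition minor (u v : quat) (i j : nat) : int :=
  qcoord u i * qcoord v j - qcoord u j * qcoord v i.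

Definition minor_comb (u v : quat) (c : nat -> nat -> int) : int :=
  \sum_(i < 4) \sum_(j < 4) c i j * minor u v i j.

Lemma dvdz_minor_comb d r u v c :
  (forall i j, (i < 4)%N -> (j < 4)%N -> (d %| r * minor u v i j)%Z) ->
  (d %| r * minor_comb u v c)%Z.
Proof.
move=> dvd_minor; rewrite mulr_sumr rpred_sum // => i _.
by rewrite mulr_sumr rpred_sum // => j _; rewrite mulrCA dvdz_mull ?dvd_minor.
Qed.

Definition plane_basis_a (u : quat) : quat := qdivz u (gcd4 u).

Definition plane_basis_b (u v : quat) (g : int) : quat :=
  qdivz (qlin (gcd4 u) v (- qdot (gcd4_coef u) v) u) g.

Section PlaneLattice.

Variables (u v : quat) (P g : int).
Hypotheses (uv0 : qdot u v = 0) (uuP : qdot u u = P) (vvP : qdot v v = P) (P_gt0 : 0 < P).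
Hypotheses (g_gt0 : 0 < g) (g_dvdP : (g %| P)%Z).
Hypotheses (g_dvd_minor : forall i j, (g %| minor u v i j)%Z)
           (g_minor_comb : exists c, g = minor_comb u v c).

Local Notation D1 := (gcd4 u).
Local Notation Y := (qdot (gcd4_coef u) v).
Let a := plane_basis_a u.
Let b := plane_basis_b u v g.
Let h := (g %/ gcd4 u)%Z.
Let K := (P %/ g)%Z.

Lemma D1_gt0 : 0 < D1.
Proof. by apply: gcd4_gt0; rewrite uuP. Qed.

Lemma D1_dvd_g : (D1 %| g)%Z.
Proof.
have [c ->] := g_minor_comb; rewrite -[minor_comb _ _ _]mul1r.
by apply: dvdz_minor_comb => i j _ _; rewrite mul1r rpredB ?dvdz_mulr ?gcd4_dvd.
Qed.

Lemma g_factor : g = h * D1.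
Proof. by rewrite /h divzK // D1_dvd_g. Qed.

Lemma P_factor : P = K * g.
Proof. by rewrite /K divzK. Qed.

Lemma h_gt0 : 0 < h.
Proof. by rewrite -(pmulr_lgt0 _ D1_gt0) -g_factor. Qed.

Lemma K_gt0 : 0 < K.
Proof. by rewrite -(pmulr_lgt0 _ g_gt0) -P_factor. Qed.

Lemma minor_gcd4_coef k :
  D1 * qcoord v k - Y * qcoord u k = \sum_(i < 4) qcoord (gcd4_coef u) i * minor u v i k.
Proof.
by rewrite -gcd4_coefP /qdot /minor !big_ord_recl big_ord0 /qcoord /=; ring.
Qed.

Lemma scale_a : qscale D1 a = u.
Proof. exact: gcd4K. Qed.

Lemma scale_b : qscale g b = qlin D1 v (- Y) u.
Proof.
apply: qdivzK => k; rewrite qcoord_lin mulNr minor_gcd4_coef.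
by rewrite rpred_sum // => i _; rewrite dvdz_mull.
Qed.

Lemma scaleP_a k : P * qcoord a k = K * h * qcoord u k.
Proof. by rewrite -[in RHS]scale_a qcoord_scale P_factor g_factor; ring. Qed.

Lemma scaleP_b k : P * qcoord b k = K * (D1 * qcoord v k - Y * qcoord u k).
Proof.
by rewrite P_factor -mulrA -qcoord_scale scale_b qcoord_lin; ring.
Qed.

Lemma basis_dots :
  [/\ qdot a u = K * h, qdot a v = 0, qdot b u = - (Y * K) & qdot b v = K * D1].
Proof.
have D1_neq0 : D1 != 0 by rewrite gt_eqF ?D1_gt0.
have g_neq0 : g != 0 by rewrite gt_eqF.
split; [apply: (mulfI D1_neq0) | apply: (mulfI D1_neq0) | apply: (mulfI g_neq0)
       | apply: (mulfI g_neq0)]; rewrite -qdot_scalel ?scale_a ?scale_b ?qdot_linl.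
- by rewrite uuP P_factor g_factor; ring.
- by rewrite uv0 mulr0.
- by rewrite (qdotC v) uv0 uuP P_factor; ring.
- by rewrite vvP uv0 P_factor g_factor; ring.
Qed.

Lemma qdot_basis_u m n : qdot (qlin m a n b) u = K * (m * h - n * Y).
Proof. by case: basis_dots => au _ bu _; rewrite qdot_linl au bu; ring. Qed.

Lemma qdot_basis_v m n : qdot (qlin m a n b) v = K * D1 * n.
Proof. by case: basis_dots => _ av _ bv; rewrite qdot_linl av bv; ring. Qed.

Lemma in_plane_basis m n : in_plane u v (qlin m a n b).
Proof.
apply: quatP => k _; rewrite qcoord_scale !qcoord_lin uuP qdot_basis_u qdot_basis_v.
transitivity (m * (P * qcoord a k) + n * (P * qcoord b k)); first by ring.
by rewrite scaleP_a scaleP_b; ring.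
Qed.

Lemma qlin_basis_inj m n m' n' : qlin m a n b = qlin m' a n' b -> m = m' /\ n = n'.
Proof.
move=> eq_lin; have K_neq0 : K != 0 by rewrite gt_eqF ?K_gt0.
have eq_n : n = n'.
  apply: (mulfI (mulf_neq0 K_neq0 (lt0r_neq0 D1_gt0))).
  by rewrite -(qdot_basis_v m) -(qdot_basis_v m') eq_lin.
split=> //; apply: (mulIf (lt0r_neq0 h_gt0)); apply: (addIr (- (n * Y))).
by apply: (mulfI K_neq0); rewrite -qdot_basis_u eq_lin qdot_basis_u eq_n.
Qed.

Lemma in_plane_coord w k : in_plane u v w ->
  P * qcoord w k = qdot w u * qcoord u k + qdot w v * qcoord v k.
Proof. by move=> w_plane; rewrite -uuP -qcoord_scale w_plane qcoord_lin. Qed.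

Lemma dvdz_dot_v w : in_plane u v w -> (K * D1 %| qdot w v)%Z.
Proof.
move=> w_plane; set r := qdot w v.
have w_coord k := in_plane_coord k w_plane.
have r_minor i j : r * minor u v i j = P * (qcoord u i * qcoord w j - qcoord u j * qcoord w i).
  symmetry; transitivity (qcoord u i * (P * qcoord w j) - qcoord u j * (P * qcoord w i)).
    by ring.
  by rewrite !w_coord /minor; ring.
have : (P * D1 %| r * g)%Z.
  have [c ->] := g_minor_comb; apply: dvdz_minor_comb => i j _ _.
  by rewrite r_minor dvdz_mul ?rpredB ?dvdz_mulr ?gcd4_dvd.
by rewrite P_factor mulrAC dvdz_mul2r // gt_eqF.
Qed.

Lemma in_plane_decomp w : in_plane u v w -> exists m n, w = qlin m a n b.
Proof.
move=> w_plane; have P_neq0 := lt0r_neq0 P_gt0.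
have [n r_def] := dvdzP (dvdz_dot_v w_plane).
have [_ _ bu _] := basis_dots.
set w' := qlin 1 w (- n) b.
have w'_coord k : P * qcoord w' k = qdot w' u * qcoord u k.
  transitivity (P * qcoord w k - n * (P * qcoord b k)); first by rewrite qcoord_lin; ring.
  by rewrite in_plane_coord // scaleP_b r_def qdot_linl bu; ring.
set m := qdot (gcd4_coef u) w'.
have w'u : qdot w' u = m * K * h.
  apply: (mulIf (lt0r_neq0 D1_gt0)); rewrite -[in LHS]gcd4_coefP -qdot_scaler.
  have -> : qscale (qdot w' u) u = qscale P w' by apply: quatP => k _; rewrite !qcoord_scale.
  by rewrite qdot_scaler P_factor g_factor; ring.
exists m, n; apply: quatP => k _; apply: (mulfI P_neq0).
have -> : qcoord w k = qcoord w' k + n * qcoord b k by rewrite qcoord_lin; ring.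
transitivity (P * qcoord w' k + n * (P * qcoord b k)); first by ring.
by rewrite w'_coord w'u qcoord_lin mulrDr !(mulrCA P) scaleP_a; ring.
Qed.

Lemma v_in_basis : v = qlin Y a h b.
Proof.
apply: quatP => k _; apply: (mulfI (lt0r_neq0 g_gt0)).
have ea := congr1 (qcoord^~ k) scale_a; have eb := congr1 (qcoord^~ k) scale_b.
rewrite /= qcoord_scale in ea; rewrite /= qcoord_scale qcoord_lin in eb.
transitivity (Y * h * (D1 * qcoord a k) + h * (g * qcoord b k)).
  by rewrite ea eb g_factor; ring.
by rewrite qcoord_lin g_factor; ring.
Qed.

Lemma gcd4_v : gcd4 v = gcdz h Y.
Proof.
apply: dvdz_anti => //.
  set D2 := gcd4 v; have D2_neq0 : D2 != 0 by rewrite lt0r_neq0 ?gcd4_gt0 ?vvP.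
  set vt := qdivz v D2; have scale_vt : qscale D2 vt = v := gcd4K v.
  have vt_plane : in_plane u v vt.
    apply: quatP => k _; apply: (mulfI D2_neq0).
    rewrite qcoord_scale qcoord_lin uuP.
    transitivity (P * qcoord (qscale D2 vt) k); first by rewrite qcoord_scale; ring.
    rewrite scale_vt mulrDr !mulrA -!qdot_scalel scale_vt (qdotC v u) uv0 vvP; ring.
  have [m [n vt_lin]] := in_plane_decomp vt_plane.
  move: scale_vt; rewrite vt_lin qscale_lin [in RHS]v_in_basis => /qlin_basis_inj[<- <-].
  by rewrite dvdz_gcd !dvdz_mulr.
apply: dvdz_gcd4 => k _; rewrite [in X in (_ %| X)%Z]v_in_basis qcoord_lin.
by rewrite rpredD // dvdz_mulr // ?dvdz_gcdl ?dvdz_gcdr.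
Qed.

Lemma basis_gram : qdot a a * qdot b b - qdot a b ^+ 2 = K ^+ 2.
Proof.
have [au av bu bv] := basis_dots.
have aa : D1 * qdot a a = K * h by rewrite -qdot_scaler scale_a au.
have ab : g * qdot a b = - (Y * K * h).
  by rewrite -qdot_scaler scale_b qdot_linr av au; ring.
have bb : g * qdot b b = K * (D1 ^+ 2 + Y ^+ 2).
  by rewrite -qdot_scaler scale_b qdot_linr bv bu; ring.
apply: (mulfI (expf_neq0 2 (mulf_neq0 (lt0r_neq0 D1_gt0) (lt0r_neq0 g_gt0)))).
transitivity ((D1 * qdot a a) * (g * qdot b b) * (D1 * g) - D1 ^+ 2 * (g * qdot a b) ^+ 2).
  by ring.
by rewrite aa ab bb g_factor; ring.
Qed.

Lemma plane_lattice_basis (R : rcfType) : is_lattice_basis R u v a b.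
Proof.
have spanP := in_rspanP R uv0 uuP vvP P_gt0.
have linP w m n : (forall k, (k < 4)%N -> qcoord w k = m * qcoord a k + n * qcoord b k) <->
    w = qlin m a n b.
  split=> [w_coord | ->]; last by move=> k _; rewrite qcoord_lin.
  by apply: quatP => k k_lt4; rewrite w_coord // qcoord_lin.
split; [|split].
- by apply/spanP; rewrite (linP a 1 0).1; [exact: in_plane_basis | move=> k _; ring].
- by apply/spanP; rewrite (linP b 0 1).1; [exact: in_plane_basis | move=> k _; ring].
- move=> w; rewrite spanP; split=> [/in_plane_decomp[m [n ->]] | [m [n /linP ->]]].
    by exists m, n => k _; rewrite qcoord_lin.
  exact: in_plane_basis.
Qed.

Lemma plane_par_area (R : rcfType) : par_area R a b = K%:~R.
Proof.
by rewrite /par_area basis_gram rmorphXn sqrtr_sqr ger0_norm // ler0z ltW ?K_gt0.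
Qed.

Lemma in_dil_conv_basis (R : rcfType) t m n : (0 < t)%N ->
  in_dil_conv R t [:: Quat 0 0 0 0; u; v; qadd u v] (qlin m a n b) <->
  0 <= n <= t%:Z * h /\ 0 <= m * h - n * Y <= t%:Z * D1 * h.
Proof.
move=> t_gt0; rewrite (in_dil_conv_square R uv0 uuP vvP P_gt0 _ t_gt0).
rewrite qdot_basis_u qdot_basis_v P_factor g_factor.
have KD1_gt0 : 0 < K * D1 by rewrite mulr_gt0 ?K_gt0 ?D1_gt0.
have n_bound : (0 <= K * D1 * n <= t%:Z * (K * (h * D1))) = (0 <= n <= t%:Z * h).
  rewrite (_ : t%:Z * _ = K * D1 * (t%:Z * h)); last by ring.
  by rewrite (pmulr_rge0 _ KD1_gt0) (ler_pM2l KD1_gt0).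
have m_bound : (0 <= K * (m * h - n * Y) <= t%:Z * (K * (h * D1))) =
    (0 <= m * h - n * Y <= t%:Z * D1 * h).
  rewrite (_ : t%:Z * _ = K * (t%:Z * D1 * h)); last by ring.
  by rewrite (pmulr_rge0 _ K_gt0) (ler_pM2l K_gt0).
rewrite n_bound m_bound.
by split=> [[_ ? ?] | [? ?]]; split=> //; exact: in_plane_basis.
Qed.

Let square_points (t : nat) : seq quat :=
  [seq qlin m a n%:Z b | n <- iota 0 (t * `|h|).+1, m <- mul_range h (n%:Z * Y) (t * `|D1|)].

Lemma absz_h : `|h|%:Z = h.
Proof. by rewrite gez0_abs // ltW ?h_gt0. Qed.

Lemma square_points_uniq t : uniq (square_points t).
Proof.
apply: allpairs_uniq_dep => [||[n m] [n' m'] _ _ /= /qlin_basis_inj[-> [->]]] //.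
  exact: iota_uniq.
by move=> n _; exact: mul_range_uniq.
Qed.

Lemma mem_square_points (R : rcfType) t w : (0 < t)%N ->
  w \in square_points t <-> in_dil_conv R t [:: Quat 0 0 0 0; u; v; qadd u v] w.
Proof.
move=> t_gt0; have D1t : (t * `|D1|)%N%:Z = t%:Z * D1 by rewrite PoszM gez0_abs.
have mem_n (n : int) : 0 <= n -> (`|n|%N \in iota 0 (t * `|h|).+1) = (n <= t%:Z * h).
  by move=> n_ge0; rewrite mem_iota add0n ltnS leq0n -lez_nat PoszM absz_h gez0_abs.
split=> [/allpairsPdep[n [m [n_in m_in ->]]] | w_in].
  rewrite -(absz_nat n) mem_n // in n_in.
  by rewrite in_dil_conv_basis // -D1t -mem_mul_range ?h_gt0.
have [w_plane _ _] := (in_dil_conv_square R uv0 uuP vvP P_gt0 _ t_gt0).1 w_in.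
have [m [n w_def]] := in_plane_decomp w_plane.
rewrite w_def in_dil_conv_basis // in w_in; case: w_in => /andP[n_ge0 n_le] m_bound.
apply/allpairsPdep; exists `|n|%N, m; rewrite gez0_abs // mem_n //.
by rewrite mem_mul_range ?h_gt0 ?D1t.
Qed.

Lemma size_square_points t :
  (size (square_points t))%:Z = g * t%:Z ^+ 2 + (gcd4 u + gcd4 v) * t%:Z + 1.
Proof.
rewrite size_allpairs_dep (eq_map (fun n => size_mul_range h (n%:Z * Y) (t * `|D1|))).
rewrite (sumn_map_add_count _ _ (fun n : nat => (h %| n%:Z * Y)%Z)).
rewrite size_iota count_dvdz_mul ?h_gt0 // gcd4_v.
rewrite -(addn1 (t * `|h|)) -(addn1 (t * _)) !(PoszD, PoszM) absz_h !gez0_abs //.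
by rewrite g_factor; ring.
Qed.

Lemma plane_square_count (R : rcfType) t : (0 < t)%N ->
  exists n : nat, lattice_count R t [:: Quat 0 0 0 0; u; v; qadd u v] n /\
    n%:Z = g * t%:Z ^+ 2 + (gcd4 u + gcd4 v) * t%:Z + 1.
Proof.
move=> t_gt0; exists (size (square_points t)); split; last exact: size_square_points.
exists (square_points t); split; first exact: square_points_uniq.
by split=> // w; exact: mem_square_points.
Qed.

End PlaneLattice.

(** * Gaussian integers *)

Definition gauss := (int * int)%type.

Definition gadd (a b : gauss) : gauss := (a.1 + b.1, a.2 + b.2).

Definition gmul (a b : gauss) : gauss := (a.1 * b.1 - a.2 * b.2, a.1 * b.2 + a.2 * b.1).

Definition gconj (a : gauss) : gauss := (a.1, - a.2).

Definition gnorm (a : gauss) : int := a.1 ^+ 2 + a.2 ^+ 2.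

Lemma gnorm_ge0 a : 0 <= gnorm a.
Proof. by rewrite addr_ge0 ?sqr_ge0. Qed.

Lemma gnorm_eq0 a : (gnorm a == 0) = (a == (0, 0)).
Proof.
case: a => a1 a2; rewrite /gnorm paddr_eq0 ?sqr_ge0 // !sqrf_eq0.
by rewrite xpair_eqE.
Qed.

Lemma exists_near_multiple (X n : int) : 0 < n -> exists k, 4 * (X - k * n) ^+ 2 <= n ^+ 2.
Proof.
move=> n_gt0; have n2_gt0 : 0 < 2 * n by rewrite mulr_gt0.
exists ((2 * X + n) %/ (2 * n))%Z.
have := divz_eq (2 * X + n) (2 * n).
have := modz_ge0 (2 * X + n) (lt0r_neq0 n2_gt0); have := ltz_pmod (2 * X + n) n2_gt0.
move: ((2 * X + n) %/ (2 * n))%Z ((2 * X + n) %% (2 * n))%Z => k rho rho_lt rho_ge0 rho_def.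
have -> : 4 * (X - k * n) ^+ 2 = (rho - n) ^+ 2.
  by rewrite (_ : rho = 2 * X + n - k * (2 * n)); [ring | rewrite rho_def; ring].
by rewrite -subr_ge0 (_ : _ - _ = rho * (2 * n - rho)); [rewrite mulr_ge0 // subr_ge0 ltW | ring].
Qed.

Lemma gauss_div a b : 0 < gnorm b ->
  exists k r, a = gadd (gmul k b) r /\ 2 * gnorm r <= gnorm b.
Proof.
move=> b_gt0; case: a b b_gt0 => a1 a2 [b1 b2]; set nb := gnorm (b1, b2) => nb_gt0.
(* k rounds a b^* / N(b) = a / b to the nearest Gaussian integer *)
have [k1 near1] := exists_near_multiple (a1 * b1 + a2 * b2) nb_gt0.
have [k2 near2] := exists_near_multiple (a2 * b1 - a1 * b2) nb_gt0.
set r := (a1 - (k1 * b1 - k2 * b2), a2 - (k1 * b2 + k2 * b1)).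
exists (k1, k2), r; split; first by rewrite /gadd /gmul /=; congr (_, _); ring.
have r_nb : gnorm r * nb = (a1 * b1 + a2 * b2 - k1 * nb) ^+ 2 + (a2 * b1 - a1 * b2 - k2 * nb) ^+ 2.
  by rewrite /r /nb /gnorm /=; ring.
rewrite -(ler_pM2r (mulr_gt0 (ltr0Sn _ 1) nb_gt0)).
rewrite (_ : 2 * gnorm r * (2 * nb) = 4 * (gnorm r * nb)); last by ring.
by rewrite r_nb mulrDr (_ : nb * _ = nb ^+ 2 + nb ^+ 2) ?lerD //; ring.
Qed.

Lemma gauss_bezout a b : exists p c d e f : gauss,
  [/\ a = gmul c p, b = gmul d p & p = gadd (gmul e a) (gmul f b)].
Proof.
have gcd_with0 a' : exists p c d e f : gauss,
    [/\ a' = gmul c p, (0, 0) = gmul d p & p = gadd (gmul e a') (gmul f (0, 0))].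
  exists a', (1, 0), (0, 0), (1, 0), (0, 0).
  by case: a' => a1 a2; rewrite /gmul /gadd /=; split; congr (_, _); ring.
have [n b_le] : exists n, (`|gnorm b| <= n)%N by exists `|gnorm b|%N.
elim: n a b b_le => [|n IHn] a b b_le.
  by move: b_le; rewrite leqn0 absz_eq0 gnorm_eq0 => /eqP ->.
have [/eqP | b_neq0] := eqVneq (gnorm b) 0; first by rewrite gnorm_eq0 => /eqP ->.
have b_gt0 : 0 < gnorm b by rewrite lt0r b_neq0 gnorm_ge0.
have [k [r [a_def r_small]]] := gauss_div a b_gt0.
have r_le : (`|gnorm r| <= n)%N.
  rewrite -lez_nat gez0_abs ?gnorm_ge0 //.
  by move: b_le; rewrite -lez_nat gez0_abs ?gnorm_ge0 //; lia.
have [p [c [d [e [f [b_def r_def p_def]]]]]] := IHn b r r_le.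
exists p, (gadd (gmul k c) d), c, f, (gadd e (gmul f (- k.1, - k.2))); split=> //.
  by rewrite a_def {1}b_def r_def /gmul /gadd /=; congr (_, _); ring.
by rewrite {1}p_def a_def /gmul /gadd /=; congr (_, _); ring.
Qed.

(** * Quaternions with Gaussian divisors *)

Definition qi : quat := Quat 0 1 0 0.

Definition qrot_i (q : quat) : quat := qmul (qmul q qi) (qconj q).

Definition gfst (q : quat) : gauss := (qx q, qy q).
Definition gsnd (q : quat) : gauss := (qz q, - qt q).

(* [quat_of_gauss c d] is c + j d, so right multiplication by a Gaussian integer acts on c
   and d separately. *)
Definition quat_of_gauss (c d : gauss) : quat := Quat c.1 c.2 d.1 (- d.2).

Ltac quat_ring :=
  cbv beta iota zeta delta [qdot qnorm qmul qconj qi qj qk qscale qrot_i qcoord minor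
    gfst gsnd gmul gadd gnorm quat_of_gauss Quat qx qy qz qt fst snd nth];
  try congr (_, _, _, _); ring.

Lemma quat_of_gaussK q : quat_of_gauss (gfst q) (gsnd q) = q.
Proof. by case: q => [[[x y] z] t]; rewrite /quat_of_gauss /= opprK. Qed.

Lemma qmul_gauss c d p :
  qmul (quat_of_gauss c d) (Quat p.1 p.2 0 0) = quat_of_gauss (gmul c p) (gmul d p).
Proof. by quat_ring. Qed.

Lemma qnormM p q : qnorm (qmul p q) = qnorm p * qnorm q.
Proof. by quat_ring. Qed.

Lemma qodd_gt0 q : qodd q -> 0 < qnorm q.
Proof.
have qnorm_ge0 : 0 <= qnorm q by rewrite /qnorm !addr_ge0 ?sqr_ge0.
by rewrite lt0r qnorm_ge0 andbT /qodd; apply: contraTneq => ->.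
Qed.

Lemma qodd_qnorm q : qodd q -> exists k, qnorm q = 2 * k + 1.
Proof.
move=> q_odd; have N_ge0 := ltW (qodd_gt0 q_odd); move: q_odd; rewrite /qodd => q_odd.
exists (`|qnorm q|./2)%:Z.
rewrite -[LHS]gez0_abs // -[in LHS](odd_double_half `|qnorm q|) q_odd.
by rewrite -muln2 PoszD PoszM addrC mulrC.
Qed.

Lemma gauss_parts_coprime q : qodd q -> no_gauss_right_divisor q ->
  exists E F, gadd (gmul E (gfst q)) (gmul F (gsnd q)) = (1, 0).
Proof.
move=> q_odd q_nodiv.
have [p [c [d [e [f [q1_def q2_def p_def]]]]]] := gauss_bezout (gfst q) (gsnd q).
have q_def : q = qmul (quat_of_gauss c d) (Quat p.1 p.2 0 0).
  by rewrite qmul_gauss -q1_def -q2_def quat_of_gaussK.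
have p_norm : gnorm p = 1.
  have p_le1 : ~ 1 < gnorm p.
    by move=> /q_nodiv; apply; exists (quat_of_gauss c d); case: (p) q_def.
  have p_neq0 : gnorm p != 0.
    have qnorm_p : qnorm (Quat p.1 p.2 0 0) = gnorm p by quat_ring.
    by apply: contraTneq (qodd_gt0 q_odd) => p0; rewrite q_def qnormM qnorm_p p0 mulr0.
  by have := gnorm_ge0 p; move: p_le1 p_neq0; rewrite ltNge => /negP; lia.
exists (gmul (gconj p) e), (gmul (gconj p) f).
transitivity (gmul (gconj p) p).
  by rewrite {4}p_def /gmul /gadd /gconj /=; congr (_, _); ring.
by rewrite -p_norm /gmul /gconj /gnorm /=; congr (_, _); ring.
Qed.

Lemma qrot_i_sqr q : qy (qrot_i q) ^+ 2 + qz (qrot_i q) ^+ 2 + qt (qrot_i q) ^+ 2 = qnorm q ^+ 2.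
Proof. by quat_ring. Qed.

Lemma qrot_i_y q : qy (qrot_i q) = qnorm q - 2 * (qz q ^+ 2 + qt q ^+ 2).
Proof. by quat_ring. Qed.

(* Both sides are the Hermitian form of (E, F) against the Gram matrix of (gfst q, gsnd q),
   whose entries are linear in qnorm q and the coordinates of qrot_i q. *)
Lemma qrot_i_gnorm q (E F : gauss) :
  2 * gnorm (gadd (gmul E (gfst q)) (gmul F (gsnd q))) =
    (gnorm E + gnorm F) * qnorm q + (gnorm E - gnorm F) * qy (qrot_i q)
    + 2 * (E.1 * F.2 - E.2 * F.1) * qz (qrot_i q) - 2 * (E.1 * F.1 + E.2 * F.2) * qt (qrot_i q).
Proof. by quat_ring. Qed.

Lemma sum_sqr_odd_unimodular (N A1 A2 A3 c0 c1 c2 c3 k : int) :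
  A1 = 2 * k + 1 -> A1 ^+ 2 + A2 ^+ 2 + A3 ^+ 2 = N ^+ 2 ->
  c0 * N + c1 * A1 + c2 * A2 + c3 * A3 = 2 ->
  exists l1 l2 l3, l1 * A1 + l2 * A2 + l3 * A3 = 1.
Proof.
move=> A1_def sum_sqr comb.
have lin : c1 * A1 + c2 * A2 + c3 * A3 = 2 - c0 * N by rewrite -comb; ring.
set K := k ^+ 2 + k.
exists (A1 - K * (2 * c1 + c0 ^+ 2 * A1 + c0 * N * c1)),
  (- (K * (2 * c2 + c0 ^+ 2 * A2 + c0 * N * c2))), (- (K * (2 * c3 + c0 ^+ 2 * A3 + c0 * N * c3))).
(* the bracket below is (2 - c0 N)(2 + c0 N) + c0^2 N^2 = 4 *)
transitivity (A1 ^+ 2 - K * (2 * (c1 * A1 + c2 * A2 + c3 * A3)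
  + c0 ^+ 2 * (A1 ^+ 2 + A2 ^+ 2 + A3 ^+ 2) + c0 * N * (c1 * A1 + c2 * A2 + c3 * A3))).
  by ring.
by rewrite lin sum_sqr A1_def /K; ring.
Qed.

Lemma qrot_i_unimodular q : qodd q -> no_gauss_right_divisor q ->
  exists l1 l2 l3, l1 * qy (qrot_i q) + l2 * qz (qrot_i q) + l3 * qt (qrot_i q) = 1.
Proof.
move=> q_odd q_nodiv; have [k N_def] := qodd_qnorm q_odd.
have [E [F EF1]] := gauss_parts_coprime q_odd q_nodiv.
apply: (@sum_sqr_odd_unimodular (qnorm q) _ _ _ (gnorm E + gnorm F) (gnorm E - gnorm F)
  (2 * (E.1 * F.2 - E.2 * F.1)) (- (2 * (E.1 * F.1 + E.2 * F.2))) (k - (qz q ^+ 2 + qt q ^+ 2))).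
- by rewrite qrot_i_y N_def; ring.
- exact: qrot_i_sqr.
- by rewrite mulNr -[in RHS](_ : 2 * gnorm (1, 0) = 2) // -EF1 qrot_i_gnorm.
Qed.

(** * The minors of the pair (q1 j q2^*, q1 k q2^* ) *)

(* The self-dual and anti-self-dual parts of the bivector u /\ v. *)
Definition minors_sd (u v : quat) : quat :=
  Quat 0 (minor u v 0 1 + minor u v 2 3) (minor u v 0 2 - minor u v 1 3)
       (minor u v 0 3 + minor u v 1 2).

Definition minors_asd (u v : quat) : quat :=
  Quat 0 (minor u v 2 3 - minor u v 0 1) (- (minor u v 0 2 + minor u v 1 3))
       (minor u v 1 2 - minor u v 0 3).

Lemma minorN u v i j : minor u v j i = - minor u v i j.
Proof. by rewrite /minor; ring. Qed.

Lemma dvdz_minors d u v :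
  (forall i j, (j < 4)%N -> (i < j)%N -> (d %| minor u v i j)%Z) ->
  forall i j, (d %| minor u v i j)%Z.
Proof.
move=> dvd_lt.
have dvd_le i j : (i <= j)%N -> (d %| minor u v i j)%Z.
  have [j_lt4 | j_ge4] := ltnP j 4; last first.
    by rewrite /minor (qcoord_out u j_ge4) (qcoord_out v j_ge4) mulr0 mul0r subrr.
  rewrite leq_eqVlt => /orP[/eqP -> | ij]; first by rewrite /minor subrr dvdz0.
  exact: dvd_lt.
by move=> i j; case: (leqP i j) => [/dvd_le // | /ltnW /dvd_le]; rewrite minorN rpredN.
Qed.

Lemma dvdz_minor_dual d u v : odd `|d| ->
  (forall k, (d %| qcoord (minors_sd u v) k)%Z) ->
  (forall k, (d %| qcoord (minors_asd u v) k)%Z) ->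
  forall i j, (d %| minor u v i j)%Z.
Proof.
move=> d_odd sd_dvd asd_dvd; apply: dvdz_minors.
have half x : (d %| 2 * x)%Z -> (d %| x)%Z.
  by rewrite !dvdzE abszM Gauss_dvdr // coprimen2.
have dy1 : (d %| minor u v 0 1 + minor u v 2 3)%Z := sd_dvd 1%N.
have dy2 : (d %| minor u v 2 3 - minor u v 0 1)%Z := asd_dvd 1%N.
have dz1 : (d %| minor u v 0 2 - minor u v 1 3)%Z := sd_dvd 2%N.
have dz2 : (d %| - (minor u v 0 2 + minor u v 1 3))%Z := asd_dvd 2%N.
have dt1 : (d %| minor u v 0 3 + minor u v 1 2)%Z := sd_dvd 3%N.
have dt2 : (d %| minor u v 1 2 - minor u v 0 3)%Z := asd_dvd 3%N.
case=> [|[|[|i]]] [|[|[|[|j]]]] // _ _; apply: half.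
- have -> : 2 * minor u v 0 1 =
    (minor u v 0 1 + minor u v 2 3) - (minor u v 2 3 - minor u v 0 1) by ring.
  exact: rpredB dy1 dy2.
- have -> : 2 * minor u v 0 2 =
    (minor u v 0 2 - minor u v 1 3) - (- (minor u v 0 2 + minor u v 1 3)) by ring.
  exact: rpredB dz1 dz2.
- have -> : 2 * minor u v 0 3 =
    (minor u v 0 3 + minor u v 1 2) - (minor u v 1 2 - minor u v 0 3) by ring.
  exact: rpredB dt1 dt2.
- have -> : 2 * minor u v 1 2 =
    (minor u v 0 3 + minor u v 1 2) + (minor u v 1 2 - minor u v 0 3) by ring.
  exact: rpredD dt1 dt2.
- have -> : 2 * minor u v 1 3 =
    - (minor u v 0 2 - minor u v 1 3) - (- (minor u v 0 2 + minor u v 1 3)) by ring.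
  by apply: rpredB dz2; rewrite rpredN.
- have -> : 2 * minor u v 2 3 =
    (minor u v 0 1 + minor u v 2 3) + (minor u v 2 3 - minor u v 0 1) by ring.
  exact: rpredD dy1 dy2.
Qed.

Lemma minor_comb_dual u v (a b : quat) :
  exists c, qdot a (minors_sd u v) + qdot b (minors_asd u v) = minor_comb u v c.
Proof.
exists (fun i j => match i, j with
  | 0%N, 1%N => qy a - qy b | 2%N, 3%N => qy a + qy b
  | 0%N, 2%N => qz a - qz b | 1%N, 3%N => - qz a - qz b
  | 0%N, 3%N => qt a - qt b | 1%N, 2%N => qt a + qt b
  | _, _ => 0 end).
rewrite /minor_comb !big_ord_recl !big_ord0 /bump /= /qdot /minors_sd /minors_asd /Quat.
by rewrite /qx /qy /qz /qt /=; ring.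
Qed.

Lemma qdot_pure a b c q : qdot (Quat 0 a b c) q = a * qy q + b * qz q + c * qt q.
Proof. by rewrite /qdot /qx /qy /qz /qt /=; ring. Qed.

Section QuaternionFrame.

Variables q1 q2 : quat.

Local Notation u := (qmul (qmul q1 qj) (qconj q2)).
Local Notation v := (qmul (qmul q1 qk) (qconj q2)).

Lemma qframe_dots :
  [/\ qdot u v = 0, qdot u u = qnorm q1 * qnorm q2 & qdot v v = qnorm q1 * qnorm q2].
Proof. by split; quat_ring. Qed.

Lemma minors_sd_qframe : minors_sd u v = qscale (qnorm q2) (qrot_i q1).
Proof. by rewrite /minors_sd; quat_ring. Qed.

Lemma minors_asd_qframe : minors_asd u v = qscale (qnorm q1) (qrot_i q2).
Proof. by rewrite /minors_asd; quat_ring. Qed.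

Hypotheses (q1_odd : qodd q1) (q2_odd : qodd q2).

Local Notation g := (gcdz (qnorm q1) (qnorm q2)).

Lemma gcd_qnorm_dvd_minor i j : (g %| minor u v i j)%Z.
Proof.
have g_odd : odd `|g|.
  have /dvdnP[c N1_def] := dvdz_gcdl (qnorm q1) (qnorm q2).
  by move: q1_odd; rewrite /qodd N1_def oddM => /andP[].
apply: dvdz_minor_dual => // k.
  by rewrite minors_sd_qframe qcoord_scale dvdz_mulr ?dvdz_gcdr.
by rewrite minors_asd_qframe qcoord_scale dvdz_mulr ?dvdz_gcdl.
Qed.

Hypotheses (q1_nodiv : no_gauss_right_divisor q1) (q2_nodiv : no_gauss_right_divisor q2).

Lemma gcd_qnorm_minor_comb : exists c, g = minor_comb u v c.
Proof.
have [x [y bezout]] := Bezoutz (qnorm q1) (qnorm q2).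
have [a1 [a2 [a3 A1_unit]]] := qrot_i_unimodular q1_odd q1_nodiv.
have [b1 [b2 [b3 A2_unit]]] := qrot_i_unimodular q2_odd q2_nodiv.
have [c comb] := minor_comb_dual u v (Quat 0 (y * a1) (y * a2) (y * a3))
  (Quat 0 (x * b1) (x * b2) (x * b3)).
exists c; rewrite -comb minors_sd_qframe minors_asd_qframe !qdot_scaler !qdot_pure -bezout.
by rewrite -[qnorm q1 in LHS]mulr1 -[qnorm q2 in LHS]mulr1 -{1}A2_unit -A1_unit; ring.
Qed.

End QuaternionFrame.

Lemma divz_mul_gcdz (m n : int) : 0 < m -> 0 < n -> (m * n %/ gcdz m n)%Z = lcmz m n.
Proof.
move=> m_gt0 n_gt0; have g_gt0 : 0 < gcdz m n by rewrite ltz_nat gcdn_gt0 absz_gt0 gt_eqF.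
rewrite -[m * n](gez0_abs (ltW (mulr_gt0 m_gt0 n_gt0))) abszM -muln_lcm_gcd PoszM.
exact: mulzK (lt0r_neq0 g_gt0).
Qed.

Theorem theorem2p12 (R : rcfType) (q1 q2 : quat) :
  qodd q1 -> qodd q2 ->
  no_gauss_right_divisor q1 -> no_gauss_right_divisor q2 ->
  let u := qmul (qmul q1 qj) (qconj q2) in
  let v := qmul (qmul q1 qk) (qconj q2) in
  (exists a b : quat, is_lattice_basis R u v a b /\
     par_area R a b = (lcmz (qnorm q1) (qnorm q2))%:~R) /\
  (forall t : nat, (0 < t)%N ->
     exists n : nat, lattice_count R t [:: Quat 0 0 0 0; u; v; qadd u v] n /\
       (n%:Z = gcdz (qnorm q1) (qnorm q2) * (t%:Z) ^+ 2
               + (gcd4 u + gcd4 v) * t%:Z + 1)).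
Proof.
move=> q1_odd q2_odd q1_nodiv q2_nodiv u v.
have [N1_gt0 N2_gt0] := (qodd_gt0 q1_odd, qodd_gt0 q2_odd).
have [uv0 uuP vvP] := qframe_dots q1 q2.
have P_gt0 : 0 < qnorm q1 * qnorm q2 by rewrite mulr_gt0.
have g_gt0 : 0 < gcdz (qnorm q1) (qnorm q2) by rewrite ltz_nat gcdn_gt0 absz_gt0 gt_eqF.
have g_dvdP : (gcdz (qnorm q1) (qnorm q2) %| qnorm q1 * qnorm q2)%Z.
  by rewrite dvdz_mulr ?dvdz_gcdl.
have g_minor := gcd_qnorm_dvd_minor q2 q1_odd.
have g_comb := gcd_qnorm_minor_comb q1_odd q2_odd q1_nodiv q2_nodiv.
split=> [|t t_gt0].
  exists (plane_basis_a u), (plane_basis_b u v (gcdz (qnorm q1) (qnorm q2))); split.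
    exact: plane_lattice_basis uv0 uuP vvP P_gt0 g_gt0 g_dvdP g_minor g_comb R.
  by rewrite (plane_par_area uv0 uuP vvP P_gt0 g_gt0 g_dvdP g_minor g_comb) divz_mul_gcdz.
exact: plane_square_count uv0 uuP vvP P_gt0 g_gt0 g_dvdP g_minor g_comb R t t_gt0.
Qed.
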